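(* Let $\mathcal{B}=(T,\bowtie)$ be a block and $(B_1,\dots,B_k)$ a legal partition of $T$ with $k$ sets. Then the schedule $\mathcal S=\mathrm{LevelSchedule}(B_1,\dots,B_k)$ satisfies $\mathrm{Depth}((T,\mathcal S))\le k$, where $\mathrm{Depth}$ is the maximum number of vertices on a directed path.
   Context: A block consists of a finite set $T$ of transactions with a symmetric irreflexive conflict relation $\bowtie$. A set is conflict-free if no two elements conflict; a legal partition of $T$ is an ordered sequence of pairwise disjoint conflict-free sets with union $T$. $\mathrm{LevelSchedule}(B_1,\dots,B_k)$: set $B_0=\emptyset$, $\mathcal S=\emptyset$; for $i=1,\dots,k$ and, for each $i$, for $j=i-1,\dots,0$ (decreasing): let $E=\{(u,v)\in B_j\times B_i: u\bowtie v\}$, let $P$ be the set of pairs $(x,y)$ with a directed path from $x$ to $y$ in the current directed graph $(T,\mathcal S)$, and set $\mathcal S\leftarrow\mathcal S\cup(E\setminus P)$; output $\mathcal S$. *)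

From mathcomp Require Import all_boot.
Set Implicit Arguments. Unset Strict Implicit. Unset Printing Implicit Defensive.

Section Block.
Variables (T : finType) (conf : rel T).

Definition conflict_free (A : {set T}) : Prop :=
  forall x y, x \in A -> y \in A -> ~~ conf x y.

Definition legal_partition (B : seq {set T}) : Prop :=
  [/\ forall i j, i < j < size B -> [disjoint nth set0 B i & nth set0 B j],
      forall i, i < size B -> conflict_free (nth set0 B i)
    & \bigcup_(A <- B) A = [set: T]].

Definition edge_rel (S : {set T * T}) : rel T := fun x y => (x, y) \in S.

(* B_j with the convention B_0 = emptyset, B_i = i-th set of the sequence. *)
Definition blk (B : seq {set T}) (j : nat) : {set T} := nth set0 (set0 :: B) j.

Definition level_step (B : seq {set T}) (S : {set T * T}) (i j : nat)
  : {set T * T} :=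
  S :|: [set p : T * T | [&& p.1 \in blk B j, p.2 \in blk B i, conf p.1 p.2
                          & ~~ connect (edge_rel S) p.1 p.2]].

(* LevelSchedule(B_1,...,B_k): for i = 1..k, for j = i-1 downto 0. *)
Definition LevelSchedule (B : seq {set T}) : {set T * T} :=
  foldl (fun S i => foldl (fun S' j => level_step B S' i j) S (rev (iota 0 i)))
        set0 (iota 1 (size B)).

Definition depth_le (S : {set T * T}) (d : nat) : Prop :=
  forall (x : T) (p : seq T), path (edge_rel S) x p -> size (x :: p) <= d.

End Block.

From mathcomp Require Import all_boot.

(* Every edge added by LevelSchedule joins a conflicting pair from B_j to B_i
   with j < i, so along any path of the schedule the index of the block
   containing the current vertex strictly increases.  These indices lie in
   1..k, hence a path visits at most k vertices. *)

Set Implicit Arguments.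
Unset Strict Implicit.
Unset Printing Implicit Defensive.

Lemma foldl_inv (A : eqType) (R : Type) (P : R -> Prop) (f : R -> A -> R)
    (z : R) (s : seq A) :
  P z -> (forall y a, a \in s -> P y -> P (f y a)) -> P (foldl f z s).
Proof.
elim: s z => [|a s IHs] z //= Pz Pf.
apply: IHs => [|y b sb]; apply: Pf => //; by rewrite inE ?sb ?orbT ?eqxx.
Qed.

Lemma path_size_le_rank (T : eqType) (e : rel T) (r : T -> nat) (k : nat)
    (x : T) (p : seq T) :
  {homo r : u v / e u v >-> u < v} -> (forall u, 0 < r u <= k) ->
  path e x p -> size (x :: p) <= k.
Proof.
move=> r_mono r_range /(homo_path r_mono) r_path.
have r_uniq : uniq (map r (x :: p)).
  by apply: (sorted_uniq ltn_trans ltnn); exact: r_path.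
rewrite -(size_map r) -[k](size_iota 1); apply: uniq_leq_size r_uniq _.
by move=> _ /mapP[u _ ->]; rewrite mem_iota add1n ltnS r_range.
Qed.

Section Schedule.
Variables (T : finType) (conf : rel T) (B : seq {set T}).

Definition forward_edges (S : {set T * T}) : Prop :=
  forall u v, (u, v) \in S ->
  exists a b, [/\ a < b, u \in blk B a & v \in blk B b].

Lemma forward_edges0 : forward_edges set0.
Proof. by move=> u v; rewrite inE. Qed.

Lemma level_step_forward S i j :
  j < i -> forward_edges S -> forward_edges (level_step conf B S i j).
Proof.
move=> ji fwdS u v; rewrite !inE => /orP[/fwdS //|/and4P[uj vi _ _]].
by exists j, i.
Qed.

Lemma LevelSchedule_forward : forward_edges (LevelSchedule conf B).
Proof.
apply: foldl_inv forward_edges0 _ => S i _ fwdS.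
apply: foldl_inv fwdS _ => S' j; rewrite mem_rev mem_iota add0n.
exact: level_step_forward.
Qed.

End Schedule.

Section Partition.
Variables (T : finType) (conf : rel T) (B : seq {set T}).
Hypothesis legalB : legal_partition conf B.

(* Blocks are numbered from 1, as in [blk]. *)
Definition block_rank (x : T) : nat := (find (fun A : {set T} => x \in A) B).+1.

Lemma block_rank_bounds x : 0 < block_rank x <= size B.
Proof.
case: legalB => _ _ coverB.
have : x \in \bigcup_(A <- B) A by rewrite coverB inE.
rewrite bigcup_seq => /bigcupP[A AB xA].
by rewrite /block_rank ltnS -has_find; apply/hasP; exists A.
Qed.

Lemma mem_blk_block_rank x : x \in blk B (block_rank x).
Proof.
have := block_rank_bounds x; rewrite /block_rank /blk /= -has_find.
exact: nth_find.
Qed.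

Lemma mem_blk_uniq x a b : x \in blk B a -> x \in blk B b -> a = b.
Proof.
case: legalB => disjB _ _.
have blk_size c : x \in blk B c.+1 -> c < size B.
  rewrite ltnNge; apply: contraTN => /(nth_default set0) Bc.
  by rewrite /blk /= Bc inE.
wlog ab : a b / a < b => [wlog_ab|].
  by case: (ltngtP a b) => [ab|ba|//] xa xb; [|symmetry]; apply: wlog_ab.
case: a ab => [|a] ab; first by rewrite /blk inE.
case: b ab => [//|b]; rewrite ltnS => ab xa xb.
have := disjB a b; rewrite ab (blk_size _ xb) => /(_ isT) /disjointFr.
by move=> /(_ x xa); rewrite -[nth _ B b]/(blk B b.+1) xb.
Qed.

Lemma blk_block_rank x a : x \in blk B a -> a = block_rank x.
Proof. by move=> xa; apply: mem_blk_uniq xa (mem_blk_block_rank x). Qed.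

End Partition.

Theorem lemma8 (T : finType) (conf : rel T) (k : nat) (B : seq {set T}) :
  symmetric conf -> irreflexive conf ->
  legal_partition conf B -> size B = k ->
  depth_le (LevelSchedule conf B) k.
Proof.
move=> _ _ legalB <- x p.
apply: path_size_le_rank (block_rank_bounds legalB) => u v.
case/LevelSchedule_forward=> a [b [ab ua vb]].
by rewrite -(blk_block_rank legalB ua) -(blk_block_rank legalB vb).
Qed.
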